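(* Let $n\geq 2$, $c\geq 2$, and let $L_{n,c}$ be the free metabelian nilpotent Lie algebra of nilpotency class $c$ generated by $x_1,\ldots,x_n$ over a field $K$ of characteristic zero. Let $u=\sum_{i=1}^n\alpha_ix_i$ with $\alpha_i\in K$ and let $v=\sum_{i=1}^n x_i$. If $[u,v]\in L_{n,c}^{S_n}$, then $u=\alpha v$ for some $\alpha\in K$.
   Context: $L_{n,c}=L_n/(L_n''+\gamma^{c+1}(L_n))$, where $L_n$ is the free Lie algebra on $x_1,\ldots,x_n$, $\gamma^1(L_n)=L_n$, $\gamma^k(L_n)=[\gamma^{k-1}(L_n),L_n]$, and $L_n''=[L_n',L_n']$ with $L_n'=[L_n,L_n]$. The symmetric group $S_n$ acts on $L_{n,c}$ by $\pi\, p(x_1,\ldots,x_n)=p(x_{\pi(1)},\ldots,x_{\pi(n)})$, and $L_{n,c}^{S_n}$ is the algebra of elements fixed by all $\pi\in S_n$ (symmetric polynomials). *)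

From HB Require Import structures.
From mathcomp Require Import all_boot all_order all_algebra all_fingroup.
Set Implicit Arguments. Unset Strict Implicit. Unset Printing Implicit Defensive.
Import GRing.Theory.
Local Open Scope ring_scope.

Definition is_lie (K : fieldType) (V : lmodType K) (br : V -> V -> V) : Prop :=
  [/\ (forall (k : K) a1 a2 b, br (k *: a1 + a2) b = k *: br a1 b + br a2 b),
      (forall (k : K) a b1 b2, br a (k *: b1 + b2) = k *: br a b1 + br a b2),
      (forall a, br a a = 0) &
      (forall a b c, br a (br b c) + br b (br c a) + br c (br a b) = 0)].

Definition metabelian (K : fieldType) (V : lmodType K) (br : V -> V -> V) : Prop :=
  forall a b c d, br (br a b) (br c d) = 0.

(* nilpotent of class <= c: gamma^{c+1}(L) = 0, i.e. every left-normed
   commutator [a_0, a_1, ..., a_c] (c+1 entries) vanishes. *)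
Definition nilp_class_le (K : fieldType) (V : lmodType K) (br : V -> V -> V)
  (c : nat) : Prop :=
  forall (a0 : V) (s : seq V), size s = c -> foldl br a0 s = 0.

Definition lie_hom (K : fieldType) (V W : lmodType K)
  (brV : V -> V -> V) (brW : W -> W -> W) (f : V -> W) : Prop :=
  (forall (k : K) a b, f (k *: a + b) = k *: f a + f b) /\
  (forall a b, f (brV a b) = brW (f a) (f b)).

(* (V, br, x) is the free metabelian nilpotent Lie algebra of class c on
   x_1..x_n, i.e. L_{n,c} = L_n / (L_n'' + gamma^{c+1}(L_n)): the free object
   on x in the variety of metabelian Lie algebras of nilpotency class <= c. *)
Definition free_metab_nilp (K : fieldType) (n c : nat) (V : lmodType K)
  (br : V -> V -> V) (x : 'I_n -> V) : Prop :=
  [/\ is_lie br, metabelian br, nilp_class_le br c &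
      forall (W : lmodType K) (brW : W -> W -> W) (y : 'I_n -> W),
        is_lie brW -> metabelian brW -> nilp_class_le brW c ->
        (exists f : V -> W, lie_hom br brW f /\ forall i, f (x i) = y i) /\
        (forall f g : V -> W, lie_hom br brW f -> lie_hom br brW g ->
           (forall i, f (x i) = y i) -> (forall i, g (x i) = y i) ->
           forall p, f p = g p)].

(* p is symmetric (p in L_{n,c}^{S_n}): fixed by the action of every
   pi in S_n, where pi acts as the Lie endomorphism x_i |-> x_{pi(i)}. *)
Definition symmetric_elt (K : fieldType) (n : nat) (V : lmodType K)
  (br : V -> V -> V) (x : 'I_n -> V) (p : V) : Prop :=
  forall (pi : 'S_n) (f : V -> V), lie_hom br br f ->
    (forall i, f (x i) = x (pi i)) -> f p = p.

(* Since v is fixed by every permutation of the generators, applying the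
   transposition (i j) to the symmetric element [u, v] shows
   [u, v] = [u', v], where u' is u with alpha_i and alpha_j swapped.
   Now send x_i, x_j to the generators e_0, e_1 of the three-dimensional
   Heisenberg algebra (which is metabelian of class 2 <= c) and every other
   x_k to 0; the central coordinates of the two images give
   alpha_i - alpha_j = alpha_j - alpha_i, so alpha_i = alpha_j in
   characteristic zero. *)
From HB Require Import structures.
From mathcomp Require Import all_boot all_order all_algebra all_fingroup.
From mathcomp Require Import ring.
Import GRing.Theory.
Local Open Scope ring_scope.

Lemma pchar0_eq_of_subr_sym (R : idomainType) (a b : R) :
  [pchar R] =i pred0 -> a - b = b - a -> a = b.
Proof.
move=> /pcharf0P charR0 sym_ab; apply/eqP; rewrite -subr_eq0.
have : 2%:R * (a - b) = 0 by rewrite mulr_natl mulr2n {2}sym_ab; ring.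
by move/eqP; rewrite mulf_eq0 charR0.
Qed.

Section LieHom.
Context {K : fieldType} {V W : lmodType K}.
Context {brV : V -> V -> V} {brW : W -> W -> W} {f : V -> W}.
Hypothesis hom_f : lie_hom brV brW f.

Lemma lie_hom0 : f 0 = 0.
Proof.
have := (proj1 hom_f) 1 0 0; rewrite !scale1r addr0 => f00.
by apply: (addrI (f 0)); rewrite addr0 -f00.
Qed.

Lemma lie_homD a b : f (a + b) = f a + f b.
Proof. by have := (proj1 hom_f) 1 a b; rewrite !scale1r. Qed.

Lemma lie_homZ k a : f (k *: a) = k *: f a.
Proof. by rewrite -[k *: a]addr0 (proj1 hom_f) lie_hom0 addr0. Qed.

Lemma lie_hom_sum (I : finType) (y : I -> V) :
  f (\sum_k y k) = \sum_k f (y k).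
Proof. exact: (big_morph f lie_homD lie_hom0). Qed.

Lemma lie_hom_lincomb (I : finType) (a : I -> K) (y : I -> V) :
  f (\sum_k a k *: y k) = \sum_k a k *: f (y k).
Proof. by rewrite lie_hom_sum; under eq_bigr do rewrite lie_homZ. Qed.

End LieHom.

Section PermSums.
Variables (R : pzRingType) (V : lmodType R) (I : finType) (pi : {perm I}).

Lemma sum_perm (y : I -> V) : \sum_k y (pi k) = \sum_k y k.
Proof. by rewrite [RHS](reindex_perm pi). Qed.

Lemma lincomb_perm (a : I -> R) (y : I -> V) :
  \sum_k a k *: y (pi k) = \sum_k a (pi^-1 k)%g *: y k.
Proof.
by rewrite [LHS](reindex_perm pi^-1%g); under eq_bigr do rewrite permKV.
Qed.

End PermSums.

Section Heisenberg.
Context {K : fieldType}.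

Definition heis_form (a b : 'rV[K]_3) : K := a 0 0 * b 0 1 - a 0 1 * b 0 0.

Definition heis_center : 'rV[K]_3 := delta_mx 0 ord_max.

Definition heis_br (a b : 'rV[K]_3) : 'rV[K]_3 := heis_form a b *: heis_center.

Lemma heis_brZ_center_l k b : heis_br (k *: heis_center) b = 0.
Proof. by rewrite /heis_br /heis_form !mxE /= !mulr0 !mul0r subrr scale0r. Qed.

Lemma heis_brZ_center_r k a : heis_br a (k *: heis_center) = 0.
Proof. by rewrite /heis_br /heis_form !mxE /= !mulr0 subrr scale0r. Qed.

Lemma heis_br_center_coord a b : heis_br a b 0 ord_max = heis_form a b.
Proof. by rewrite !mxE /= mulr1. Qed.

Lemma heis_lie : is_lie heis_br.
Proof.
split=> [k a1 a2 b|k a b1 b2|a|a b c].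
- by rewrite /heis_br scalerA -scalerDl /heis_form !mxE; congr (_ *: _); ring.
- by rewrite /heis_br scalerA -scalerDl /heis_form !mxE; congr (_ *: _); ring.
- by rewrite /heis_br /heis_form mulrC subrr scale0r.
- by rewrite !heis_brZ_center_r !addr0.
Qed.

Lemma heis_metabelian : metabelian heis_br.
Proof. by move=> a b c d; rewrite heis_brZ_center_l. Qed.

Lemma heis_nilp_class_le c : (2 <= c)%N -> nilp_class_le heis_br c.
Proof.
move=> c_ge2 a0 [|b1 [|b2 s]] size_s; rewrite -size_s // in c_ge2.
have heis_br0l b : heis_br 0 b = 0 by have := heis_brZ_center_l 0 b; rewrite scale0r.
by rewrite /= heis_brZ_center_l {c_ge2 size_s}; elim: s => //= b s; rewrite heis_br0l.
Qed.

End Heisenberg.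

Section FreeMetabNilp.
Context {K : fieldType} {n c : nat} {V : lmodType K}.
Context {br : V -> V -> V} {x : 'I_n -> V}.
Hypothesis free_x : free_metab_nilp c br x.

Lemma free_metab_nilp_perm (pi : 'S_n) :
  exists f : V -> V, lie_hom br br f /\ forall i, f (x i) = x (pi i).
Proof.
have [lieV metV nilV univ] := free_x.
by have [] := univ V br (fun i => x (pi i)) lieV metV nilV.
Qed.

Lemma symmetric_bracket_perm (alpha : 'I_n -> K) (pi : 'S_n) :
  symmetric_elt br x (br (\sum_i alpha i *: x i) (\sum_i x i)) ->
  br (\sum_i alpha i *: x i) (\sum_i x i) =
  br (\sum_i alpha (pi^-1 i)%g *: x i) (\sum_i x i).
Proof.
move=> sym; have [f [hom_f fx]] := free_metab_nilp_perm pi.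
rewrite -{1}(sym pi f hom_f fx) (proj2 hom_f).
rewrite (lie_hom_lincomb hom_f) (lie_hom_sum hom_f).
under eq_bigr do rewrite fx.
under [X in br _ X]eq_bigr do rewrite fx.
by rewrite lincomb_perm sum_perm.
Qed.

Lemma free_metab_nilp_heis (i j : 'I_n) : (2 <= c)%N ->
  exists g : V -> 'rV[K]_3, lie_hom br (@heis_br K) g /\
    forall a b : 'I_n -> K,
      heis_form (g (\sum_k a k *: x k)) (g (\sum_k b k *: x k)) =
      a i * b j - a j * b i.
Proof.
move=> c_ge2; have [_ _ _ univ] := free_x.
pose y k : 'rV[K]_3 := (k == i)%:R *: delta_mx 0 0 + (k == j)%:R *: delta_mx 0 1.
have [[g [hom_g gx]] _] :=
  univ _ _ y heis_lie heis_metabelian (heis_nilp_class_le _ c_ge2).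
have coord0 (a : 'I_n -> K) : g (\sum_k a k *: x k) 0 0 = a i.
  rewrite (lie_hom_lincomb hom_g) summxE (bigD1 i) //= big1 => [|k k_i].
    by rewrite gx !mxE /= eqxx mulr0 !addr0 !mulr1.
  by rewrite gx !mxE /= (negbTE k_i) mul0r mulr0 add0r mulr0.
have coord1 (a : 'I_n -> K) : g (\sum_k a k *: x k) 0 1 = a j.
  rewrite (lie_hom_lincomb hom_g) summxE (bigD1 j) //= big1 => [|k k_j].
    by rewrite gx !mxE /= eqxx mulr0 add0r addr0 !mulr1.
  by rewrite gx !mxE /= (negbTE k_j) mulr0 mul0r add0r mulr0.
by exists g; split=> // a b; rewrite /heis_form !coord0 !coord1.
Qed.

End FreeMetabNilp.

Theorem lemma2p2 (K : fieldType) (n c : nat) (V : lmodType K)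
  (br : V -> V -> V) (x : 'I_n -> V) (alpha : 'I_n -> K) :
  [pchar K] =i pred0 -> (2 <= n)%N -> (2 <= c)%N ->
  free_metab_nilp c br x ->
  symmetric_elt br x (br (\sum_(i < n) alpha i *: x i) (\sum_(i < n) x i)) ->
  exists a : K, \sum_(i < n) alpha i *: x i = a *: \sum_(i < n) x i.
Proof.
move=> charK0 n_ge2 c_ge2 free_x sym.
suff alpha_const i j : alpha i = alpha j.
  pose i0 : 'I_n := Ordinal (ltnW n_ge2).
  exists (alpha i0); rewrite scaler_sumr.
  by apply: eq_bigr => k _; rewrite (alpha_const k i0).
have [g [hom_g g_form]] := free_metab_nilp_heis free_x i j c_ge2.
have v_lincomb : \sum_k x k = \sum_k (fun=> 1 : K) k *: x k.
  by apply: eq_bigr => k _; rewrite scale1r.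
have := symmetric_bracket_perm free_x _ (tperm i j) sym.
move/(congr1 (fun p => g p 0 ord_max)).
rewrite !(proj2 hom_g) !heis_br_center_coord v_lincomb !g_form.
by rewrite tpermV tpermL tpermR !mulr1; apply: pchar0_eq_of_subr_sym.
Qed.
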